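(* Let $g$ be a total recursive function such that, writing $\Phi_i(x,y)$ for the $i$-th $\Sigma^0_2$ formula, $\Phi_i(x,y)$ holds iff $W_{g(i,x,y)}$ is finite. Let $F(i,x,y,s)=\max_{y'\leq y}|W_{g(i,x,y'),s}|$ and $A_i=\{x:\forall y\ \lim_{s\to\infty}F(i,x,y,s)<\infty\}$. For every $i$ and $n$, let $B(i,n,y,s)=\min\{F(i,x,y,s):x\in B^n\}$. Then: if $A_i\cap B^n\neq\emptyset$, then for every $y$, $\lim_{s\to\infty}B(i,n,y,s)<\infty$; and if $A_i\cap B^n=\emptyset$, then there exists $y_0$ such that for all $y>y_0$, $\lim_{s\to\infty}B(i,n,y,s)=\infty$.
   Context: $W_e$ denotes the $e$-th recursively enumerable set and $W_{e,s}$ its enumeration up to stage $s$. For $x=\sum_{i=0}^{k}2^{n_i}\in\mathbb{Z}^+$ with $n_0<\cdots<n_k$, set $\mu(x)=n_k$. For each $n$, $B^n=\{x\in\mathbb{Z}^+:\mu(x)=n\}$ (a finite set). *)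

From mathcomp Require Import all_boot.
From mathcomp Require Import finmap.
Set Implicit Arguments. Unset Strict Implicit. Unset Printing Implicit Defensive.
Local Open Scope fset_scope.

(* mu x = n_k, the largest exponent in the binary expansion of x > 0,
   i.e. the largest n with 2^n <= x. *)
Definition mu (x : nat) : nat := trunc_log 2 x.

Definition inB (n x : nat) : bool := (0 < x) && (mu x == n).

Definition enumeration (Ws : nat -> nat -> {fset nat}) : Prop :=
  forall e s, Ws e s `<=` Ws e s.+1.

Definition Ffun (Ws : nat -> nat -> {fset nat}) (g : nat -> nat -> nat -> nat)
  (i x y s : nat) : nat :=
  \max_(y' < y.+1) #|` Ws (g i x y') s|.

Definition lim_finite (f : nat -> nat) : Prop :=
  exists L s0, forall s, s0 <= s -> f s = L.

Definition lim_infty (f : nat -> nat) : Prop :=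
  forall M, exists s0, forall s, s0 <= s -> M <= f s.

Definition Aset Ws g (i x : nat) : Prop :=
  forall y, lim_finite (fun s => Ffun Ws g i x y s).

(* B(i,n,y,s) = min { F(i,x,y,s) : x in B^n }  (B^n is nonempty: 2^n in B^n,
   and B^n is contained in [0, 2^(n+1))) *)
Definition Bfun Ws g (i n y s : nat) : nat :=
  \big[minn/Ffun Ws g i (2 ^ n) y s]_(0 <= x < 2 ^ n.+1 | inB n x) Ffun Ws g i x y s.

(* Every sequence s |-> F(i,x,y,s) is nondecreasing in s (and in y), and so
   is their minimum B(i,n,y,s) over the finite set B^n.  A nondecreasing
   sequence of naturals either stabilises or tends to infinity.  If some
   x in B^n lies in A_i, then B(i,n,y,.) is bounded by the eventually
   constant F(i,x,y,.), hence stabilises.  If no x in B^n lies in A_i, each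
   x in B^n has a y_x with F(i,x,y,.) unbounded, hence (monotonicity in y)
   divergent for every y >= y_x; above the largest y_x all finitely many
   sequences diverge, and so does their minimum. *)

From mathcomp Require Import all_boot.
From mathcomp Require Import finmap.
From Stdlib Require Import Classical.

Local Open Scope fset_scope.

Section NatSequences.

Implicit Types f g : nat -> nat.

Lemma homo_bounded_lim_finite M f :
  {homo f : m n / m <= n} -> (forall s, f s < M) -> lim_finite f.
Proof.
move=> f_homo; elim: M => [|M IH] f_lt; first by have := f_lt 0.
case: (classic (exists s, f s = M)) => [[s fsM] | noM].
  exists M, s => t le_st; apply/eqP.
  by rewrite eqn_leq -ltnS f_lt -{1}fsM f_homo.
apply: IH => s; rewrite ltn_neqAle -ltnS f_lt andbT.
by apply/eqP => fsM; apply: noM; exists s.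
Qed.

Lemma homo_lim_finite_or_infty f :
  {homo f : m n / m <= n} -> lim_finite f \/ lim_infty f.
Proof.
move=> f_homo; case: (classic (lim_infty f)) => [|not_infty]; [by right | left].
have [M not_above] := not_all_ex_not _ _ not_infty.
apply: (@homo_bounded_lim_finite M) => // s.
rewrite ltnNge; apply/negP => le_M_fs; apply: not_above.
by exists s => t le_st; apply: leq_trans le_M_fs (f_homo _ _ le_st).
Qed.

Lemma lim_finite_homo_le f g :
  {homo g : m n / m <= n} -> (forall s, g s <= f s) ->
  lim_finite f -> lim_finite g.
Proof.
move=> g_homo le_gf [L [s0 fL]]; apply: (@homo_bounded_lim_finite L.+1) => // s.
rewrite ltnS (leq_trans (g_homo _ _ (leq_maxl s s0))) //.
by rewrite -(fL (maxn s s0)) ?leq_maxr.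
Qed.

Lemma lim_infty_le f g : (forall s, f s <= g s) -> lim_infty f -> lim_infty g.
Proof.
move=> le_fg f_infty M; have [s0 Mf] := f_infty M.
by exists s0 => s le_s0s; apply: leq_trans (Mf _ le_s0s) (le_fg s).
Qed.

Lemma eventually_all (I : eqType) (r : seq I) (P : I -> nat -> Prop) :
  (forall x, x \in r -> exists m, forall k, m <= k -> P x k) ->
  exists m, forall x, x \in r -> forall k, m <= k -> P x k.
Proof.
elim: r => [|a r IH] ev; first by exists 0.
have [ma Pa] := ev a (mem_head a r).
have [mr Pr] := IH (fun x xr => ev x (mem_behead (s := a :: r) xr)).
exists (maxn ma mr) => x xar k; rewrite geq_max => /andP[le_ma le_mr].
by move: xar; rewrite in_cons => /predU1P[-> | xr]; [apply: Pa | apply: Pr].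
Qed.

End NatSequences.

Section BigMin.

Variables (I : eqType) (r : seq I) (P : pred I).

Lemma geq_bigmin_seq (d : nat) (F : I -> nat) x :
  x \in r -> P x -> \big[minn/d]_(i <- r | P i) F i <= F x.
Proof.
move=> + Px; elim: r => // a t IH; rewrite in_cons big_cons.
case/predU1P => [<- | xt]; first by rewrite Px geq_minl.
by case: ifP => _; [apply: leq_trans (geq_minr _ _) (IH xt) | apply: IH].
Qed.

Lemma homo_bigmin (d : nat -> nat) (F : I -> nat -> nat) :
  {homo d : m n / m <= n} -> (forall i, {homo F i : m n / m <= n}) ->
  {homo (fun s => \big[minn/d s]_(i <- r | P i) F i s) : m n / m <= n}.
Proof.
move=> d_homo F_homo s s' le_ss'.
apply: (big_ind2 (fun a b => a <= b)) => [|a b a' b' le_ab le_ab'|i _].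
- exact: d_homo.
- by rewrite leq_min !geq_min le_ab le_ab' orbT.
- exact: F_homo.
Qed.

Lemma lim_infty_bigmin (d : nat -> nat) (F : I -> nat -> nat) :
  lim_infty d -> (forall i, i \in r -> P i -> lim_infty (F i)) ->
  lim_infty (fun s => \big[minn/d s]_(i <- r | P i) F i s).
Proof.
move=> d_infty F_infty M.
have [sF MF] : exists sF, forall i, i \in r -> forall s, sF <= s -> P i -> M <= F i s.
  apply: eventually_all => i ir; case: (boolP (P i)) => [Pi | _].
    by have [s0 MF] := F_infty i ir Pi M; exists s0 => s le_s0s _; apply: MF.
  by exists 0.
have [sd Md] := d_infty M.
exists (maxn sF sd) => s; rewrite geq_max => /andP[le_sF le_sd].
rewrite big_seq_cond; apply: (big_ind (fun v => M <= v)) => [|a b|i /andP[ir Pi]].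
- exact: Md.
- by rewrite leq_min => -> ->.
- exact: MF.
Qed.

End BigMin.

Lemma inB_lt n x : inB n x -> x < 2 ^ n.+1.
Proof. by case/andP => _ /eqP <-; apply: trunc_log_ltn. Qed.

Lemma inB_expn n : inB n (2 ^ n).
Proof. by rewrite /inB expn_gt0 /= /mu trunc_expnK. Qed.

Lemma inB_mem_iota n x : inB n x -> x \in index_iota 0 (2 ^ n.+1).
Proof. by move=> Bx; rewrite mem_index_iota inB_lt. Qed.

Section Enumeration.

Context {Ws : nat -> nat -> {fset nat}} {g : nat -> nat -> nat -> nat}.
Hypothesis HW : enumeration Ws.

Lemma enumeration_homo e : {homo Ws e : s s' / s <= s' >-> s `<=` s'}.
Proof.
by apply: homo_leq => [X|Y X Z|s]; [exact: fsubset_refl | exact: fsubset_trans | exact: HW].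
Qed.

Lemma Ffun_homo i x y : {homo Ffun Ws g i x y : s s' / s <= s'}.
Proof.
move=> s s' le_ss'; apply/bigmax_leqP => j _.
apply: leq_trans (leq_bigmax j); exact/fsubset_leq_card/enumeration_homo.
Qed.

Lemma Ffun_homo_y i x s : {homo (fun y => Ffun Ws g i x y s) : y y' / y <= y'}.
Proof.
move=> y y' le_yy'; apply/bigmax_leqP => j _.
have lt_jy' : j < y'.+1 by rewrite ltnS (leq_trans _ le_yy') // -ltnS.
exact: (leq_bigmax (Ordinal lt_jy')).
Qed.

Lemma Bfun_homo i n y : {homo Bfun Ws g i n y : s s' / s <= s'}.
Proof. by apply: homo_bigmin => [|x]; apply: Ffun_homo. Qed.

Lemma Bfun_le_Ffun i n x y s : inB n x -> Bfun Ws g i n y s <= Ffun Ws g i x y s.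
Proof. by move=> Bx; apply: geq_bigmin_seq => //; apply: inB_mem_iota. Qed.

Lemma notAset_lim_infty i x : ~ Aset Ws g i x ->
  exists y0, forall y, y0 <= y -> lim_infty (Ffun Ws g i x y).
Proof.
move=> notA; have [y0 not_fin] := not_all_ex_not _ _ notA.
exists y0 => y le_y0y; apply: (@lim_infty_le (Ffun Ws g i x y0)).
  by move=> s; apply: Ffun_homo_y.
by case: (homo_lim_finite_or_infty _ (Ffun_homo i x y0)).
Qed.

End Enumeration.

Theorem lemma3p5 (Ws : nat -> nat -> {fset nat}) (g : nat -> nat -> nat -> nat)
  (HW : enumeration Ws) (i n : nat) :
  ((exists x, inB n x /\ Aset Ws g i x) ->
     forall y, lim_finite (fun s => Bfun Ws g i n y s)) /\
  ((forall x, inB n x -> ~ Aset Ws g i x) ->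
     exists y0, forall y, y0 < y -> lim_infty (fun s => Bfun Ws g i n y s)).
Proof.
split=> [[x [Bx Ax]] y | notA].
  apply: (lim_finite_homo_le _ _ (Bfun_homo HW i n y) _ (Ax y)).
  by move=> s; apply: Bfun_le_Ffun.
have [y0 Fy0] : exists y0, forall x, x \in index_iota 0 (2 ^ n.+1) ->
    forall y, y0 <= y -> inB n x -> lim_infty (Ffun Ws g i x y).
  apply: eventually_all => x _; case: (boolP (inB n x)) => [Bx | _].
    have [y1 Fy1] := notAset_lim_infty HW i x (notA x Bx).
    by exists y1 => y le_y1y _; apply: Fy1.
  by exists 0.
exists y0 => y /ltnW le_y0y.
apply: lim_infty_bigmin => [|x xr Bx]; last exact: Fy0.
by apply: Fy0 (inB_expn n) => //; apply: inB_mem_iota (inB_expn n).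
Qed.
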